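(* For any $m>8\pi$ there exist $\varepsilon>0$ and $\ell>0$ such that, with $\tau(t):=\varepsilon-\ell t$ and $a(t):=4e^{\tau(t)}$ for $t\in(0,\varepsilon/\ell)$, the function $$\underline M(\rho,t):=\frac{a(t)\rho}{\rho+\tau(t)^3},\qquad(\rho,t)\in[0,1]\times[0,\varepsilon/\ell),$$ satisfies $$\sup_{t\in(0,\varepsilon/\ell)}\underline M(1,t)<\frac{m}{2\pi},\qquad \inf_{\rho\in(0,1)}\underline M_\rho(\rho,t)>0\ \text{ for all }t\in[0,\varepsilon/\ell),$$ and $$\Theta\underline M\le0\quad\text{for all }\rho\in(0,1),\ t\in(0,\varepsilon/\ell).$$ In particular $\underline M(0,t)=0$ for all $t\in(0,\varepsilon/\ell)$, while $\underline M(\rho,t)\to4$ as $t\uparrow\varepsilon/\ell$ for every $\rho\in(0,1]$.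
   Context: For $T>0$ and $f\in C^{2,1}((0,1)\times(0,T))$ the operator $\Theta$ is defined by $$\Theta f:=f_t-4\rho f_{\rho\rho}-2f_\rho\Big(f-\frac{m\rho}{2\pi}\Big).$$ *)

From Stdlib Require Import Reals.
From Coquelicot Require Import Coquelicot.
Open Scope R_scope.

Definition tau (eps ell t : R) : R := eps - ell * t.
Definition acoef (eps ell t : R) : R := 4 * exp (tau eps ell t).
Definition Mlow (eps ell rho t : R) : R :=
  acoef eps ell t * rho / (rho + (tau eps ell t) ^ 3).

Definition d_t (f : R -> R -> R) (rho t : R) : R := Derive (fun s => f rho s) t.
Definition d_rho (f : R -> R -> R) (rho t : R) : R := Derive (fun r => f r t) rho.
Definition d_rhorho (f : R -> R -> R) (rho t : R) : R :=
  Derive (fun r => Derive (fun r' => f r' t) r) rho.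

Definition Theta (m : R) (f : R -> R -> R) (rho t : R) : R :=
  d_t f rho t - 4 * rho * d_rhorho f rho t
  - 2 * d_rho f rho t * (f rho t - m * rho / (2 * PI)).

(* Take ell = 1.  For fixed t the profile a rho / (rho + tau^3) is an
   increasing Möbius function of rho, and Theta M factors as
   a rho / x^3 times the quadratic form
   -x^2 + 3 tau^2 x + 8 tau^3 - 2 a tau^3 + (m/pi) tau^3 x  in  x = rho + tau^3.
   With a = 4 e^tau >= 4 (1 + tau) and (m/pi) tau <= 1 this form is at most
   -(x - 2 tau^2)^2 - 4 tau^4 <= 0.  Taking moreover e^eps < m/(8 pi) keeps
   M(1,t) <= 4 e^eps below m/(2 pi), and as tau -> 0 the profile tends to 4. *)
From Stdlib Require Import Reals Lra.
From Coquelicot Require Import Coquelicot.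
Open Scope R_scope.

Lemma tau_end (eps ell : R) : ell <> 0 -> tau eps ell (eps / ell) = 0.
Proof. intros Hell. unfold tau. field. exact Hell. Qed.

Lemma acoef_pos (eps ell t : R) : 0 < acoef eps ell t.
Proof. unfold acoef. generalize (exp_pos (tau eps ell t)). lra. Qed.

Lemma acoef_ge (eps ell t : R) : 4 * (1 + tau eps ell t) <= acoef eps ell t.
Proof. unfold acoef. generalize (exp_ineq1_le (tau eps ell t)). lra. Qed.

Lemma is_derive_mobius (a b r : R) : r + b <> 0 ->
  is_derive (fun r => a * r / (r + b)) r (a * b / (r + b) ^ 2).
Proof. intros Hrb. auto_derive; [exact Hrb | field; exact Hrb]. Qed.

Lemma is_derive_mobius_slope (a b r : R) : r + b <> 0 ->
  is_derive (fun r => a * b / (r + b) ^ 2) r (- 2 * a * b / (r + b) ^ 3).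
Proof.
  intros Hrb. auto_derive.
  - rewrite Rmult_1_r. apply Rmult_integral_contrapositive; auto.
  - field. exact Hrb.
Qed.

Lemma d_rho_Mlow (eps ell rho t : R) : rho + tau eps ell t ^ 3 <> 0 ->
  d_rho (Mlow eps ell) rho t
  = acoef eps ell t * tau eps ell t ^ 3 / (rho + tau eps ell t ^ 3) ^ 2.
Proof. intros Hx. apply is_derive_unique, is_derive_mobius, Hx. Qed.

Lemma d_rhorho_Mlow (eps ell rho t : R) : 0 < rho + tau eps ell t ^ 3 ->
  d_rhorho (Mlow eps ell) rho t
  = - 2 * acoef eps ell t * tau eps ell t ^ 3 / (rho + tau eps ell t ^ 3) ^ 3.
Proof.
  intros Hx. set (b := tau eps ell t ^ 3) in *.
  apply is_derive_unique.
  apply (is_derive_ext_loc (fun r => acoef eps ell t * b / (r + b) ^ 2)).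
  - apply (filter_imp (fun r => - b < r)); [| apply open_gt; lra].
    intros r Hr. symmetry. apply d_rho_Mlow. fold b. lra.
  - apply is_derive_mobius_slope. lra.
Qed.

Lemma is_derive_Mlow_t (eps ell rho t : R) : rho + tau eps ell t ^ 3 <> 0 ->
  is_derive (fun s => Mlow eps ell rho s) t
    (- ell * acoef eps ell t * rho / (rho + tau eps ell t ^ 3)
     + 3 * ell * tau eps ell t ^ 2 * acoef eps ell t * rho
       / (rho + tau eps ell t ^ 3) ^ 2).
Proof.
  unfold Mlow, acoef, tau, Rminus. intros Hx.
  auto_derive; [exact Hx | field; exact Hx].
Qed.

Lemma d_t_Mlow (eps ell rho t : R) : rho + tau eps ell t ^ 3 <> 0 ->
  d_t (Mlow eps ell) rho t
  = - ell * acoef eps ell t * rho / (rho + tau eps ell t ^ 3)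
    + 3 * ell * tau eps ell t ^ 2 * acoef eps ell t * rho
      / (rho + tau eps ell t ^ 3) ^ 2.
Proof. intros Hx. apply is_derive_unique, is_derive_Mlow_t, Hx. Qed.

Lemma Theta_Mlow (m eps ell rho t : R) : 0 < rho + tau eps ell t ^ 3 ->
  let a := acoef eps ell t in
  let tau := tau eps ell t in
  let x := rho + tau ^ 3 in
  Theta m (Mlow eps ell) rho t
  = a * rho / x ^ 3 * (- ell * x ^ 2 + 3 * ell * tau ^ 2 * x + 8 * tau ^ 3
                       - 2 * a * tau ^ 3 + m / PI * tau ^ 3 * x).
Proof.
  intros Hx. assert (Hx0 : rho + tau eps ell t ^ 3 <> 0) by lra.
  intros a tau0 x. unfold Theta.
  rewrite d_t_Mlow, d_rhorho_Mlow, d_rho_Mlow by assumption.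
  unfold Mlow. fold a tau0 x.
  field. split; [apply PI_neq0 | exact Hx0].
Qed.

Lemma Theta_form_nonpos (q tau a x : R) :
  0 <= tau -> q * tau <= 1 -> 4 * (1 + tau) <= a -> 0 <= x ->
  - x ^ 2 + 3 * tau ^ 2 * x + 8 * tau ^ 3 - 2 * a * tau ^ 3 + q * tau ^ 3 * x <= 0.
Proof.
  intros Htau Hq Ha Hx.
  assert (Hdrift : q * tau ^ 3 * x <= tau ^ 2 * x).
  { replace (q * tau ^ 3 * x) with (q * tau * (tau ^ 2 * x)) by ring.
    assert (0 <= tau ^ 2 * x) by (apply Rmult_le_pos; [apply pow_le|]; lra).
    nra. }
  assert (Hreaction : 8 * tau ^ 3 - 2 * a * tau ^ 3 <= - 8 * tau ^ 4).
  { assert (0 <= tau ^ 3) by (apply pow_le; lra). simpl in *. nra. }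
  assert (Hsquare : 0 <= (x - 2 * tau ^ 2) ^ 2) by apply pow2_ge_0.
  assert (0 <= tau ^ 4) by (apply pow_le; lra).
  nra.
Qed.

Lemma Theta_Mlow_nonpos (m eps rho t : R) :
  0 < rho -> 0 < tau eps 1 t -> m / PI * tau eps 1 t <= 1 ->
  Theta m (Mlow eps 1) rho t <= 0.
Proof.
  intros Hrho Htau Hq.
  assert (0 < tau eps 1 t ^ 3) by (apply pow_lt; lra).
  assert (Ha := acoef_pos eps 1 t).
  rewrite Theta_Mlow by lra. cbv zeta.
  apply Rmult_le_0_l.
  - apply Rlt_le, Rdiv_lt_0_compat; [nra | apply pow_lt; lra].
  - rewrite Rmult_1_r, Ropp_mult_distr_l_reverse, Rmult_1_l.
    apply Theta_form_nonpos; [lra | exact Hq | apply acoef_ge | lra].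
Qed.

Lemma Mlow_le_acoef (eps ell rho t : R) : 0 < rho -> 0 <= tau eps ell t ->
  Mlow eps ell rho t <= acoef eps ell t.
Proof.
  intros Hrho Htau. unfold Mlow.
  assert (Ha := acoef_pos eps ell t).
  assert (0 <= tau eps ell t ^ 3) by (apply pow_le; lra).
  apply Rle_div_l; [lra | nra].
Qed.

Lemma d_rho_Mlow_ge (eps ell rho t : R) : 0 < rho < 1 -> 0 <= tau eps ell t ->
  let b := tau eps ell t ^ 3 in
  acoef eps ell t * b / (1 + b) ^ 2 <= d_rho (Mlow eps ell) rho t.
Proof.
  intros Hrho Htau b.
  assert (Hb : 0 <= b) by (apply pow_le; lra).
  assert (Ha := acoef_pos eps ell t).
  rewrite d_rho_Mlow by (fold b; lra). fold b.
  unfold Rdiv. apply Rmult_le_compat_l; [nra |].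
  apply Rinv_le_contravar; [apply pow_lt; lra |]. simpl. nra.
Qed.

Lemma Mlow_at_end (eps ell rho : R) : ell <> 0 -> rho <> 0 ->
  Mlow eps ell rho (eps / ell) = 4.
Proof.
  intros Hell Hrho. unfold Mlow, acoef.
  rewrite tau_end, exp_0 by exact Hell. field. simpl. lra.
Qed.

Lemma Mlow_cvg_end (eps ell rho : R) : ell <> 0 -> rho <> 0 ->
  filterlim (fun t => Mlow eps ell rho t) (at_left (eps / ell)) (locally 4).
Proof.
  intros Hell Hrho.
  apply (filterlim_filter_le_1 _ (filter_le_within _)).
  rewrite <- (Mlow_at_end eps ell rho Hell Hrho).
  apply (ex_derive_continuous (K := R_AbsRing) (V := R_NormedModule)).
  eexists. apply is_derive_Mlow_t.
  rewrite tau_end by exact Hell. simpl. lra.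
Qed.

Lemma exists_short_lifetime (m : R) : m > 8 * PI ->
  exists eps : R, 0 < eps /\ m / PI * eps <= 1 /\ 4 * exp eps < m / (2 * PI).
Proof.
  intros Hm. assert (HPI := PI_RGT_0).
  assert (Hratio : 1 < m / (8 * PI)) by (apply Rlt_div_r; lra).
  assert (Hln : 0 < ln (m / (8 * PI))) by (rewrite <- ln_1; apply ln_increasing; lra).
  exists (Rmin (PI / m) (ln (m / (8 * PI)) / 2)). repeat split.
  - apply Rmin_case; [apply Rdiv_lt_0_compat |]; lra.
  - apply Rle_trans with (m / PI * (PI / m)).
    + apply Rmult_le_compat_l; [apply Rlt_le, Rdiv_lt_0_compat; lra | apply Rmin_l].
    + right. field. lra.
  - apply Rlt_le_trans with (4 * exp (ln (m / (8 * PI)))).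
    + apply Rmult_lt_compat_l, exp_increasing; [lra |].
      apply Rle_lt_trans with (ln (m / (8 * PI)) / 2); [apply Rmin_r | lra].
    + rewrite exp_ln by lra. right. field. lra.
Qed.

Theorem lemma2p1 :
  forall m : R, m > 8 * PI ->
  exists eps ell : R, 0 < eps /\ 0 < ell /\
    (* sup_{t in (0, eps/ell)} M(1,t) < m/(2 pi) *)
    (exists c : R, c < m / (2 * PI) /\
       forall t, 0 < t < eps / ell -> Mlow eps ell 1 t <= c) /\
    (* inf_{rho in (0,1)} M_rho(rho,t) > 0 for every t in [0, eps/ell) *)
    (forall t, 0 <= t < eps / ell ->
       exists c : R, 0 < c /\
         forall rho, 0 < rho < 1 -> c <= d_rho (Mlow eps ell) rho t) /\
    (* Theta M <= 0 on (0,1) x (0, eps/ell) *)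
    (forall rho t, 0 < rho < 1 -> 0 < t < eps / ell ->
       Theta m (Mlow eps ell) rho t <= 0) /\
    (* M(0,t) = 0 *)
    (forall t, 0 < t < eps / ell -> Mlow eps ell 0 t = 0) /\
    (* M(rho,t) -> 4 as t increases to eps/ell, for rho in (0,1] *)
    (forall rho, 0 < rho <= 1 ->
       filterlim (fun t => Mlow eps ell rho t) (at_left (eps / ell)) (locally 4)).
Proof.
  intros m Hm.
  destruct (exists_short_lifetime m Hm) as (eps & Heps & Hdrift & Hsup).
  assert (Htau : forall t, 0 <= t < eps -> 0 < tau eps 1 t <= eps)
    by (intros t Ht; unfold tau; lra).
  exists eps, 1. rewrite Rdiv_1_r.
  repeat split; [lra | lra | | | | |].
  - exists (4 * exp eps). split; [exact Hsup |]. intros t Ht.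
    apply Rle_trans with (acoef eps 1 t); [apply Mlow_le_acoef; unfold tau; lra |].
    unfold acoef, tau. apply Rmult_le_compat_l; [lra |].
    apply Rlt_le, exp_increasing. lra.
  - intros t Ht. specialize (Htau t Ht).
    eexists. split; [| intros rho Hrho; apply d_rho_Mlow_ge; lra].
    assert (0 < tau eps 1 t ^ 3) by (apply pow_lt; lra).
    assert (Ha := acoef_pos eps 1 t).
    apply Rdiv_lt_0_compat; [nra | apply pow_lt; lra].
  - intros rho t Hrho Ht. specialize (Htau t ltac:(lra)).
    apply Theta_Mlow_nonpos; [lra | lra |].
    apply Rle_trans with (m / PI * eps); [| exact Hdrift].
    apply Rmult_le_compat_l; [| lra].
    apply Rlt_le, Rdiv_lt_0_compat; generalize PI_RGT_0; lra.
  - intros t _. unfold Mlow, Rdiv. ring.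
  - intros rho Hrho.
    pose proof (Mlow_cvg_end eps 1 rho ltac:(lra) ltac:(lra)) as Hcvg.
    rewrite Rdiv_1_r in Hcvg. exact Hcvg.
Qed.
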